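(* (a) Let $T$ be a numerical semigroup with $\alpha$-rectangular Apéry set, and let $d_1,d_2$ be coprime positive integers with $d_1\in T$ not a minimal generator of $T$, $d_2\ge 2$, $d_1\notin\mathrm{Ap}(T)$ and $d_1>d_2\,m(T)$. Then the numerical semigroup $S=d_2T+d_1\mathbb N=\{d_2t+d_1k: t\in T,k\in\mathbb N\}$ has $\alpha$-rectangular Apéry set. (b) Conversely, every numerical semigroup $S\neq\mathbb N$ with $\alpha$-rectangular Apéry set is of the form $S=d_2T+d_1\mathbb N$ for some numerical semigroup $T$ with $\alpha$-rectangular Apéry set and integers $d_1,d_2$ satisfying all the hypotheses in (a).
   Context: A numerical semigroup is a submonoid $S$ of $(\mathbb N,+)$ with finite complement in $\mathbb N$; $g_1<\dots<g_\nu$ is its minimal system of generators, $m(S)=g_1$ its multiplicity, and $\mathrm{Ap}(S)=\{s\in S: s-m(S)\notin S\}$. For $i=2,\dots,\nu$, $\alpha_i=\max\{h\in\mathbb N: hg_i\in\mathrm{Ap}(S)\}$, and $\mathrm{Ap}(S)$ is $\alpha$-rectangular if $\mathrm{Ap}(S)=\{\sum_{i=2}^\nu\lambda_ig_i: 0\le\lambda_i\le\alpha_i\}$. (Under the hypotheses of (a), $S=d_2T+d_1\mathbb N$ is the gluing of $T$ and $\mathbb N$, minimally generated by $d_2$ times the minimal generators of $T$ together with $d_1$.) *)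

From mathcomp Require Import all_boot.
From Stdlib Require Import ClassicalEpsilon.
Set Implicit Arguments. Unset Strict Implicit. Unset Printing Implicit Defensive.

Definition is_numsg (S : nat -> Prop) : Prop :=
  S 0 /\ (forall a b, S a -> S b -> S (a + b)) /\
  exists c, forall n, c <= n -> S n.

Definition is_mingen (S : nat -> Prop) (g : nat) : Prop :=
  S g /\ 0 < g /\
  ~ (exists a b, 0 < a /\ 0 < b /\ S a /\ S b /\ g = a + b).

Definition mult (S : nat -> Prop) : nat :=
  epsilon (inhabits 0)
    (fun m => 0 < m /\ S m /\ forall n, 0 < n -> S n -> m <= n).

(* Apery set w.r.t. the multiplicity: s in S with s - m(S) not in S
   (for s < m(S), s - m(S) is a negative integer, hence not in S). *)
Definition Ap (S : nat -> Prop) (s : nat) : Prop :=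
  S s /\ ~ (mult S <= s /\ S (s - mult S)).

Definition alpha (S : nat -> Prop) (g : nat) : nat :=
  epsilon (inhabits 0)
    (fun a => Ap S (a * g) /\ forall h, Ap S (h * g) -> h <= a).

Definition mingens_list (S : nat -> Prop) (gs : seq nat) : Prop :=
  uniq gs /\ forall g, g \in gs <-> is_mingen S g.

Definition alpha_rect (S : nat -> Prop) : Prop :=
  exists gs : seq nat, mingens_list S gs /\
    forall x, Ap S x <->
      exists lam : nat -> nat,
        (forall g, g \in gs -> g != mult S -> lam g <= alpha S g) /\
        x = \sum_(g <- gs | g != mult S) lam g * g.

Definition gluing (T : nat -> Prop) (d1 d2 : nat) : nat -> Prop :=
  fun x => exists t k, T t /\ x = d2 * t + d1 * k.

From mathcomp Require Import all_boot zify.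
From Stdlib Require Import ClassicalEpsilon Classical Lia.
Set Implicit Arguments. Unset Strict Implicit. Unset Printing Implicit Defensive.

(* In S = d2 T + d1 N with d1, d2 coprime, an equality
   d2 a + d1 k = d2 b + d1 k' with k < d2 forces k' = k + d2 r and
   a = b + d1 r (glue_cancel).  With d1 - m(T) in T and d1 > d2 m(T) this
   gives m(S) = d2 m(T), Ap(S) = d2 Ap(T) + {0, d1, ..., (d2 - 1) d1},
   alpha_S(d2 h) = alpha_T(h), alpha_S(d1) = d2 - 1 and the minimal
   generators d2 gens(T) + {d1}, so rectangularity transfers from T to S.

   For alpha-rectangular S each generator i other than m obeys a
   relation (alpha_i + 1) i = (q + 1) m + (an element of the box); say the
   relation of i uses l if it can involve l.  Along a cycle of this relation
   the box element sum alpha_z z would leave Ap(S), so some generator j is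
   used by no relation.  The elements with a j-free normal form then form a
   submonoid all of whose elements are divisible by d = alpha_j + 1 (the
   multiples l j, 0 < l < d, lie in Ap(S) and no j-free element matches their
   residue mod m); hence d divides m and every generator but j, gcd(j, d) = 1,
   T = S / d is alpha-rectangular and S = d T + j N as in part (a). *)

(* A classical predicate on nat, seen as a boolean one, so that ssrnat's
   ex_minn / ex_maxn can be used to extract extremal witnesses. *)
Definition pdec (P : nat -> Prop) : pred nat :=
  fun n => if excluded_middle_informative (P n) then true else false.

Lemma pdecP (P : nat -> Prop) n : reflect (P n) (pdec P n).
Proof. by rewrite /pdec; case: excluded_middle_informative => h; constructor. Qed.

Lemma ex_least (P : nat -> Prop) :
  (exists n, P n) -> exists n, P n /\ forall k, P k -> n <= k.
Proof.
case=> n Pn; have exP : exists n, pdec P n by exists n; apply/pdecP.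
by case: (ex_minnP exP) => k /pdecP Pk kmin; exists k; split=> // j /pdecP/kmin.
Qed.

Lemma ex_greatest (P : nat -> Prop) B :
  (exists n, P n) -> (forall n, P n -> n <= B) ->
  exists n, P n /\ forall k, P k -> k <= n.
Proof.
case=> n Pn bndP; have exP : exists n, pdec P n by exists n; apply/pdecP.
have bnd : forall n, pdec P n -> n <= B by move=> k /pdecP/bndP.
by case: (ex_maxnP exP bnd) => k /pdecP Pk kmax; exists k; split=> // j /pdecP/kmax.
Qed.

Lemma Ap_in (S : nat -> Prop) x : Ap S x -> S x. Proof. by case. Qed.

Lemma notAp_shift (S : nat -> Prop) x :
  S x -> ~ Ap S x -> mult S <= x /\ S (x - mult S).
Proof. by move=> Sx notA; apply: NNPP => H; apply: notA. Qed.

Section NumericalSemigroup.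

Variable S : nat -> Prop.
Hypothesis numS : is_numsg S.

Lemma numsg0 : S 0. Proof. by case: numS. Qed.

Lemma numsgD a b : S a -> S b -> S (a + b).
Proof. by case: numS => _ [addS _]; apply: addS. Qed.

Lemma numsgMn k a : S a -> S (k * a).
Proof.
move=> Sa; elim: k => [|k IHk]; first by rewrite mul0n; exact: numsg0.
by rewrite mulSn; apply: numsgD.
Qed.

Lemma numsg_sum (I : eqType) (r : seq I) (F : I -> nat) :
  (forall i, i \in r -> S (F i)) -> S (\sum_(i <- r) F i).
Proof.
move=> SF; rewrite big_seq; apply: (big_ind S numsg0 numsgD) => i.
exact: SF.
Qed.

Lemma numsg_cofinite : exists c, forall n, c <= n -> S n.
Proof. by case: numS => _ []. Qed.

Lemma mult_spec :
  [/\ 0 < mult S, S (mult S) & forall n, 0 < n -> S n -> mult S <= n].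
Proof.
have [m [[m_gt0 Sm] m_min]] : exists m, (0 < m /\ S m) /\
    forall k, 0 < k /\ S k -> m <= k.
  have [c Sc] := numsg_cofinite.
  by apply: ex_least; exists c.+1; split; last exact: Sc.
have witness : exists m, 0 < m /\ S m /\ forall n, 0 < n -> S n -> m <= n.
  by exists m; do 2!split=> //; move=> n n_gt0 Sn; apply: m_min.
by case: (epsilon_spec (inhabits 0) _ witness) => ? [? ?]; split.
Qed.

Lemma mult_gt0 : 0 < mult S. Proof. by case: mult_spec. Qed.
Lemma mult_in : S (mult S). Proof. by case: mult_spec. Qed.
Lemma mult_le n : 0 < n -> S n -> mult S <= n. Proof. by case: mult_spec => _ _; apply. Qed.

Lemma multMn_in q : S (q * mult S). Proof. exact/numsgMn/mult_in. Qed.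

Lemma mult_eq n :
  0 < n -> S n -> (forall k, 0 < k -> S k -> n <= k) -> mult S = n.
Proof.
move=> n_gt0 Sn n_min; apply/eqP; rewrite eqn_leq mult_le //=.
exact: n_min mult_gt0 mult_in.
Qed.

Lemma Ap0 : Ap S 0.
Proof. by split; [exact: numsg0 | move=> [m_le0 _]; have := mult_gt0; lia]. Qed.

Lemma Ap_decomp x : S x -> exists q w, Ap S w /\ x = q * mult S + w.
Proof.
elim: x {-2}x (leqnn x) => [|N IHN] x le_xN Sx.
  by exists 0, 0; split; [exact: Ap0 | lia].
have [Apx | notApx] := classic (Ap S x); first by exists 0, x.
have [le_mx Sxm] := notAp_shift Sx notApx.
have [q [w [Apw Exm]]] := IHN (x - mult S) ltac:(have := mult_gt0; lia) Sxm.
by exists q.+1, w; split=> //; rewrite mulSn; lia.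
Qed.

Lemma Ap_summand a b : Ap S (a + b) -> S a -> S b -> Ap S a.
Proof.
move=> [_ notAab] Sa Sb; split=> // [[le_ma Sam]]; apply: notAab; split; first lia.
have -> : a + b - mult S = (a - mult S) + b by lia.
exact: numsgD.
Qed.

Lemma Ap_inj_mod a b : Ap S a -> Ap S b -> a = b %[mod mult S] -> a = b.
Proof.
wlog le_ab : a b / a <= b.
  move=> W Aa Ab Eab; have [le_ab | /ltnW le_ba] := leqP a b; first exact: W.
  by symmetry; apply: W.
move=> [Sa _] [_ notAb] Eab.
have /dvdnP [k Ek] : mult S %| b - a by rewrite -eqn_mod_dvd // Eab.
case: k Ek => [|k] Ek; first lia.
exfalso; apply: notAb; split; first (rewrite mulSn in Ek; lia).
have -> : b - mult S = k * mult S + a by rewrite mulSn in Ek; lia.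
exact/numsgD/Sa/multMn_in.
Qed.

Lemma Ap_bounded : exists B, forall x, Ap S x -> x <= B.
Proof.
have [c Sc] := numsg_cofinite; exists (c + mult S) => x [Sx notAx].
rewrite leqNgt; apply/negP => lt_x; apply: notAx; split; first lia.
by apply: Sc; lia.
Qed.

Lemma alpha_spec g :
  0 < g -> Ap S (alpha S g * g) /\ forall h, Ap S (h * g) -> h <= alpha S g.
Proof.
move=> g_gt0; have [B boundB] := Ap_bounded.
apply: (epsilon_spec (inhabits 0) (fun a => Ap S (a * g) /\ _)).
apply: (ex_greatest (B := B)); first by exists 0; rewrite mul0n; exact: Ap0.
by move=> h /boundB; apply: leq_trans; rewrite leq_pmulr.
Qed.

Lemma alpha_eq g a :
  0 < g -> Ap S (a * g) -> (forall h, Ap S (h * g) -> h <= a) -> alpha S g = a.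
Proof.
move=> g_gt0 Aa a_max; have [Aal al_max] := alpha_spec g_gt0.
by apply/eqP; rewrite eqn_leq a_max // al_max.
Qed.

End NumericalSemigroup.

Lemma coprime_mod_cancel d c k j : coprime c d -> c * k = c * j %[mod d] -> k = j %[mod d].
Proof.
move=> cop_cd; wlog le_kj : k j / k <= j.
  move=> W Ekj; have [le_kj | /ltnW le_jk] := leqP k j; first exact: W.
  by symmetry; apply: W.
have le_ckj : c * k <= c * j by rewrite leq_mul2l le_kj orbT.
move=> /esym/eqP; rewrite eqn_mod_dvd // -mulnBr Gauss_dvdr; last by rewrite coprime_sym.
by rewrite -eqn_mod_dvd // => /eqP.
Qed.

Lemma coprime_ndvd a b : coprime a b -> 2 <= b -> ~ b %| a.
Proof.
move=> cop_ab b_gt1 dvd_ba.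
have : b %| gcdn a b by rewrite dvdn_gcd dvd_ba dvdnn.
by move/eqP: cop_ab => ->; rewrite dvdn1; lia.
Qed.

Lemma coprime_residue d1 d2 n :
  0 < d2 -> coprime d1 d2 -> exists2 k, k < d2 & d1 * k = n %[mod d2].
Proof.
move=> d2_gt0 cop_d; set x := chinese d1 d2 0 n.
have dvd_d1x : d1 %| x by rewrite /dvdn chinese_modl // mod0n.
exists ((x %/ d1) %% d2); first by rewrite ltn_mod.
by rewrite modnMmr mulnC divnK // chinese_modr.
Qed.

Section Gluing.

Variables (T : nat -> Prop) (d1 d2 : nat).
Hypotheses (numT : is_numsg T) (d1_gt0 : 0 < d1) (d2_gt1 : 2 <= d2)
  (cop_d : coprime d1 d2).

Local Notation S := (gluing T d1 d2).
Local Notation mT := (mult T).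

Lemma d2_gt0 : 0 < d2. Proof. exact: ltnW d2_gt1. Qed.

Lemma d2_ndvd_d1 : ~ d2 %| d1.
Proof. exact: coprime_ndvd. Qed.

Lemma glue_cancel a b k j :
  d2 * a + d1 * k = d2 * b + d1 * j -> k < d2 ->
  exists r, j = k + d2 * r /\ a = b + d1 * r.
Proof.
move=> E lt_kd2.
have : k = j %[mod d2].
  apply: (coprime_mod_cancel cop_d).
  by rewrite -(modnMDl a (d1 * k)) -(modnMDl b (d1 * j)) ![_ * d2]mulnC E.
rewrite (modn_small lt_kd2) => Ekj.
have Ej := divn_eq j d2; rewrite -Ekj in Ej.
exists (j %/ d2); split; first lia.
apply/eqP; rewrite -(eqn_pmul2l d2_gt0); apply/eqP.
rewrite Ej mulnDr in E; rewrite mulnDr mulnCA [d2 * (j %/ d2)]mulnC; lia.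
Qed.

Lemma glue_T t : T t -> S (d2 * t).
Proof. by move=> Tt; exists t, 0; rewrite muln0 addn0. Qed.

Lemma glue_d1 : S d1.
Proof. by exists 0, 1; split; [exact: (numsg0 numT) | lia]. Qed.

Lemma glue_add a b : S a -> S b -> S (a + b).
Proof.
move=> [t [k [Tt ->]]] [t' [k' [Tt' ->]]].
by exists (t + t'), (k + k'); split; [exact: (numsgD numT) | lia].
Qed.

(* S has finite complement: beyond d2 c + d1 d2 (c a conductor bound of T),
   choose the coefficient k < d2 of d1 by its residue mod d2. *)
Lemma glue_numsg : is_numsg S.
Proof.
split; first by exists 0, 0; split; [exact: (numsg0 numT) | lia].
split; first exact: glue_add.
have [c Tc] := numsg_cofinite numT.
exists (d2 * c + d1 * d2) => n le_n.
have [k lt_kd2 Ek] := coprime_residue n d2_gt0 cop_d.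
have le_d1k : d1 * k <= n.
  have : d1 * k <= d1 * d2 by rewrite leq_mul2l (ltnW lt_kd2) orbT.
  lia.
have /dvdnP [t Et] : d2 %| n - d1 * k by rewrite -eqn_mod_dvd // Ek.
by exists t, k; split; [apply: Tc; nia | lia].
Qed.

Hypothesis Td1 : T d1.

(* Normal form in S: as d2 copies of d1 equal d2 times the element d1 of T,
   the coefficient of d1 can be taken below d2. *)
Lemma glue_normal x : S x -> exists t k, [/\ T t, k < d2 & x = d2 * t + d1 * k].
Proof.
move=> [t [k [Tt ->]]].
exists (t + d1 * (k %/ d2)), (k %% d2); split.
- by apply: (numsgD numT) => //; rewrite mulnC; exact: (numsgMn numT).
- by rewrite ltn_mod d2_gt0.
- by rewrite {1}(divn_eq k d2) mulnDr mulnDr mulnCA mulnA; lia.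
Qed.

Section LargeD1.

Hypothesis lt_d2mT_d1 : d2 * mT < d1.

(* m(S) = d2 m(T): the elements involving d1 are at least d1 > d2 m(T). *)
Lemma glue_mult : mult S = d2 * mT.
Proof.
apply: (mult_eq glue_numsg).
- by rewrite muln_gt0 d2_gt0 (mult_gt0 numT).
- exact/glue_T/(mult_in numT).
move=> x x_gt0 [t [[|j] [Tt Ex]]]; subst x; last by nia.
move: x_gt0; rewrite muln0 addn0 muln_gt0 leq_mul2l => /andP [_ t_gt0].
by rewrite (mult_le numT) ?orbT.
Qed.

Lemma glue_Ap x :
  Ap S x <-> exists w k, [/\ Ap T w, k < d2 & x = d2 * w + d1 * k].
Proof.
split.
  move=> [Sx notApx]; have [t [k [Tt lt_kd2 Ex]]] := glue_normal Sx.
  have [[|q] [w [Apw Et]]] := Ap_decomp numT Tt; first by exists w, k; split=> //; lia.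
  exfalso; apply: notApx; rewrite glue_mult; split; first by nia.
  exists (q * mT + w), k; split; first by apply: (numsgD numT); [exact: (multMn_in numT) | case: Apw].
  by rewrite mulSn in Et; nia.
move=> [w [k [Apw lt_kd2 ->]]]; split; first by exists w, k; split=> //; case: Apw.
rewrite glue_mult => [[le_x [t [j [Tt Ej]]]]].
have [r [_ Ew]] : exists r, j = k + d2 * r /\ w = (mT + t) + d1 * r.
  by apply: glue_cancel => //; lia.
case: Apw => _; apply; split; first lia.
have -> : w - mT = t + r * d1 by lia.
exact/(numsgD numT)/(numsgMn numT).
Qed.

Lemma glue_alpha_T h : 0 < h -> alpha S (d2 * h) = alpha T h.
Proof.
move=> h_gt0; have [Apa a_max] := alpha_spec numT h_gt0.
apply: (alpha_eq glue_numsg); first by rewrite muln_gt0 d2_gt0.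
  by apply/glue_Ap; exists (alpha T h * h), 0; split=> //; lia.
move=> l /glue_Ap [w [k [Apw lt_kd2 Ew]]]; apply: a_max.
have [r [Er Ew']] : exists r, 0 = k + d2 * r /\ w = l * h + d1 * r.
  by apply: glue_cancel => //; lia.
have r0 : r = 0 by lia.
by rewrite Ew' r0 muln0 addn0 in Apw.
Qed.

Hypothesis notApd1 : ~ Ap T d1.

Lemma glue_alpha_d1 : alpha S d1 = d2.-1.
Proof.
apply: (alpha_eq glue_numsg) => //.
  by apply/glue_Ap; exists 0, d2.-1; split; [exact: (Ap0 numT) | lia | lia].
move=> l /glue_Ap [w [k [Apw lt_kd2 Ew]]].
have [r [Er Ew']] : exists r, l = k + d2 * r /\ w = 0 + d1 * r.
  by apply: glue_cancel => //; lia.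
case: r Er Ew' => [|r] Er Ew'; first lia.
(* otherwise w = d1 (r + 1) would lie outside Ap(T), since d1 does *)
exfalso; case: Apw => _; apply.
have [le_mT_d1 Td1m] := notAp_shift Td1 notApd1.
split; first nia.
have -> : w - mT = (d1 - mT) + r * d1 by nia.
exact/(numsgD numT)/(numsgMn numT).
Qed.

(* d1 is a minimal generator of S: it is not a multiple of d2. *)
Lemma glue_mingen_d1 : is_mingen S d1.
Proof.
split; first exact: glue_d1; split=> //.
move=> [a [b [a_gt0 [b_gt0 [[t [k [Tt Ea]]] [[t' [k' [Tt' Eb]]] Ed1]]]]]].
(* both summands are smaller than d1, so neither involves d1 *)
case: k Ea => [|k] Ea; last by nia.
case: k' Eb => [|k'] Eb; last by nia.
by apply: d2_ndvd_d1; apply/dvdnP; exists (t + t'); lia.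
Qed.

Hypothesis notgen_d1 : ~ is_mingen T d1.

(* Minimal generators of T give minimal generators of S, since d1 is not
   one of them. *)
Lemma glue_mingen_T h : is_mingen T h -> is_mingen S (d2 * h).
Proof.
move=> [Th [h_gt0 indec_h]].
split; first exact: glue_T; split; first by rewrite muln_gt0 d2_gt0.
move=> [a [b [a_gt0 [b_gt0 [[t [k [Tt Ea]]] [[t' [k' [Tt' Eb]]] Eh]]]]]].
have [r [Er Eh']] : exists r, k + k' = 0 + d2 * r /\ h = (t + t') + d1 * r.
  by apply: glue_cancel d2_gt0; lia.
case: r Er Eh' => [|r] Er Eh'.
  (* no d1 involved: h = t + t' is a decomposition in T *)
  apply: indec_h; exists t, t'; have [k0 k'0] : k = 0 /\ k' = 0 by lia.
  by split; [nia | split; [nia | do 2!split=> //; lia]].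
(* h = (t + t' + d1 r) + d1, and d1 itself is not a minimal generator *)
have [Z | pos] := posnP (t + t' + d1 * r).
  by apply: notgen_d1; have -> : d1 = h by lia.
apply: indec_h; exists (t + t' + d1 * r), d1; do 2!split=> //; split; last by split=> //; lia.
by apply: (numsgD numT); [exact: (numsgD numT) | rewrite mulnC; exact: (numsgMn numT)].
Qed.

Lemma glue_mingen_inv g :
  is_mingen S g -> g = d1 \/ exists2 h, is_mingen T h & g = d2 * h.
Proof.
move=> [[t [k [Tt Eg]]] [g_gt0 indec_g]].
case: k Eg => [|k] Eg.
  right; exists t; last lia.
  split=> //; split; first by nia.
  move=> [a [b [a_gt0 [b_gt0 [Ta [Tb Et]]]]]]; apply: indec_g.
  exists (d2 * a), (d2 * b); rewrite !muln_gt0 d2_gt0 a_gt0 b_gt0.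
  by do 2!split=> //; split; [exact: glue_T | split; [exact: glue_T | lia]].
(* g = d1 + (d2 t + d1 k) must be the trivial decomposition *)
have [-> | ne] := eqVneq g d1; first by left.
exfalso; apply: indec_g; exists d1, (d2 * t + d1 * k).
split=> //; split.
  by case: (posnP (d2 * t + d1 * k)) => // Z; move: ne; rewrite Eg mulnS; lia.
split; first exact: glue_d1.
by split; [exists t, k | lia].
Qed.

Variable gensT : seq nat.
Hypothesis gensT_spec : mingens_list T gensT.

Definition glue_gens : seq nat := [seq d2 * h | h <- gensT] ++ [:: d1].

Lemma glue_mingens : mingens_list S glue_gens.
Proof.
case: gensT_spec => uniq_gT gT_spec; split.
  rewrite cat_uniq map_inj_in_uniq ?uniq_gT /=; last first.
    by move=> a b _ _ /eqP; rewrite eqn_pmul2l ?d2_gt0 // => /eqP.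
  rewrite orbF andbT; apply/mapP => [[h _ Eh]].
  by apply: d2_ndvd_d1; apply/dvdnP; exists h; lia.
move=> g; rewrite mem_cat inE; split.
  by case/orP => [/mapP [h /gT_spec gen_h ->] | /eqP ->];
    [exact: glue_mingen_T | exact: glue_mingen_d1].
case/glue_mingen_inv => [-> | [h /gT_spec gen_h ->]]; first by rewrite eqxx orbT.
by rewrite map_f.
Qed.

(* The rectangular parametrization sum of S splits into d2 times that of T
   plus the d1-term (d1 differs from m(S) = d2 m(T) since d1 > d2 m(T)). *)
Lemma glue_sum (lam : nat -> nat) :
  \sum_(g <- glue_gens | g != mult S) lam g * g =
  d2 * \sum_(h <- gensT | h != mT) lam (d2 * h) * h + lam d1 * d1.
Proof.
rewrite glue_mult big_cat big_map /= big_cons big_nil.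
have -> : (d1 != d2 * mT) = true by apply/negP => /eqP E; lia.
rewrite addn0 big_distrr /=; congr (_ + _).
apply: eq_big => [h | h _]; first by rewrite eqn_pmul2l ?d2_gt0.
by rewrite mulnCA.
Qed.

(* A coefficient function on glue_gens, built from one on gensT and a
   coefficient for d1 (well defined since d1 is not a multiple of d2). *)
Definition glue_coef (mu : nat -> nat) (k : nat) : nat -> nat :=
  fun g => if g == d1 then k else mu (g %/ d2).

Lemma glue_coef_T mu k h : glue_coef mu k (d2 * h) = mu h.
Proof.
rewrite /glue_coef; case: eqP => [E | _]; last by rewrite mulKn ?d2_gt0.
by exfalso; apply: d2_ndvd_d1; apply/dvdnP; exists h; lia.
Qed.

Lemma glue_coef_d1 mu k : glue_coef mu k d1 = k.
Proof. by rewrite /glue_coef eqxx. Qed.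

Lemma gensT_gt0 h : h \in gensT -> 0 < h.
Proof. by case: gensT_spec => _ gT_spec /gT_spec [_ []]. Qed.

Lemma glue_gens_d1 : d1 \in glue_gens.
Proof. by rewrite mem_cat inE eqxx orbT. Qed.

Lemma d1_neq_mult : d1 != mult S.
Proof. by rewrite glue_mult; apply/eqP => E; lia. Qed.

Hypothesis rectT : forall x, Ap T x <-> exists lam : nat -> nat,
  (forall g, g \in gensT -> g != mT -> lam g <= alpha T g) /\
  x = \sum_(g <- gensT | g != mT) lam g * g.

Lemma glue_rect x : Ap S x <-> exists lam : nat -> nat,
  (forall g, g \in glue_gens -> g != mult S -> lam g <= alpha S g) /\
  x = \sum_(g <- glue_gens | g != mult S) lam g * g.
Proof.
split.
  move/glue_Ap => [w [k [/rectT [mu [mu_box ->]] lt_kd2 ->]]].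
  exists (glue_coef mu k); split; last first.
    rewrite glue_sum glue_coef_d1 [k * d1]mulnC; congr (d2 * _ + _).
    by apply: eq_bigr => h _; rewrite glue_coef_T.
  move=> g; rewrite mem_cat inE => /orP [/mapP [h hT ->] | /eqP ->] ne.
    rewrite glue_coef_T glue_alpha_T ?gensT_gt0 //; apply: mu_box => //.
    by apply: contra ne => /eqP ->; rewrite glue_mult.
  by rewrite glue_coef_d1 glue_alpha_d1; lia.
move=> [lam [lam_box ->]]; rewrite glue_sum; apply/glue_Ap.
exists (\sum_(h <- gensT | h != mT) lam (d2 * h) * h), (lam d1); split.
- apply/rectT; exists (fun h => lam (d2 * h)); split=> // h hT ne.
  rewrite -glue_alpha_T ?gensT_gt0 //; apply: lam_box; first by rewrite mem_cat map_f.
  by rewrite glue_mult eqn_pmul2l ?d2_gt0.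
- by have := lam_box d1 glue_gens_d1 d1_neq_mult; rewrite glue_alpha_d1; lia.
- by rewrite [lam d1 * d1]mulnC.
Qed.

End LargeD1.
End Gluing.

Lemma map_traject (T : Type) (f : T -> T) y n :
  map f (traject f y n) = traject f (f y) n.
Proof. by elim: n y => [|n IHn] y //=; rewrite IHn. Qed.

Lemma periodic_orbit (T : eqType) (O : seq T) (f : T -> T) x :
  x \in O -> {in O, forall z, f z \in O} ->
  exists C, [/\ uniq C, C != [::], {subset C <= O} & perm_eq (map f C) C].
Proof.
move=> xO fO.
have iterO k : iter k f x \in O by elim: k => [|k IHk] //=; exact: fO.
have ex_loop : exists n, looping f x n.
  exists (size O); apply: negbNE; rewrite -looping_uniq; apply/negP => uniq_tr.
  have sub_tr : {subset traject f x (size O).+1 <= O} by move=> y /trajectP [i _ ->].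
  by have := uniq_leq_size uniq_tr sub_tr; rewrite size_traject ltnn.
(* b + 1 is the length of the shortest looping prefix of the orbit of x *)
case: (ex_minnP ex_loop) => [[|b] // loop_b b_min].
have uniq_b : uniq (traject f x b.+1).
  by rewrite looping_uniq; apply/negP => /b_min; rewrite ltnn.
move: loop_b => /trajectP [a lt_ab Ea]; set y := iter a f x.
have Etr : traject f x b.+1 = traject f x a ++ traject f y (b.+1 - a).
  by rewrite /y -trajectD subnKC // ltnW.
have period : iter (b.+1 - a) f y = y by rewrite /y -iterD subnK ?(ltnW lt_ab).
exists (traject f y (b.+1 - a)); split.
- by move: uniq_b; rewrite Etr cat_uniq => /and3P [].
- by rewrite -size_eq0 size_traject; lia.
- by move=> z /trajectP [i _ ->]; rewrite /y -iterD.
rewrite map_traject; case En: (b.+1 - a) period => [|n] period; first lia.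
have : perm_eq (y :: traject f (f y) n.+1) (y :: traject f y n.+1).
  by rewrite -trajectS trajectSr period perm_rcons.
by rewrite perm_cons.
Qed.

Definition squot (S : nat -> Prop) (d : nat) : nat -> Prop := fun t => S (d * t).

Section Quotient.

Variables (S : nat -> Prop) (d : nat).
Hypotheses (numS : is_numsg S) (d_gt0 : 0 < d).

Lemma squot_numsg : is_numsg (squot S d).
Proof.
split; first by rewrite /squot muln0; exact: (numsg0 numS).
split; first by move=> a b Sa Sb; rewrite /squot mulnDr; exact: (numsgD numS).
have [c Sc] := numsg_cofinite numS; exists c => n le_cn; apply: Sc.
exact: leq_trans le_cn (leq_pmull _ d_gt0).
Qed.

Hypothesis dvd_dm : d %| mult S.

Lemma mult_squot_eq : mult S = d * mult (squot S d).
Proof.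
have Em : mult S = d * (mult S %/ d) by rewrite mulnC divnK.
suff -> : mult (squot S d) = mult S %/ d by [].
apply: (mult_eq squot_numsg).
- by move: (mult_gt0 numS); rewrite {1}Em muln_gt0 => /andP [].
- by rewrite /squot -Em; exact: (mult_in numS).
move=> k k_gt0 Sdk; rewrite -(leq_pmul2l d_gt0) -Em.
by apply: (mult_le numS) Sdk; rewrite muln_gt0 d_gt0.
Qed.

Lemma squot_Ap t : Ap (squot S d) t <-> Ap S (d * t).
Proof.
by rewrite /Ap /squot mulnBr mult_squot_eq leq_pmul2l.
Qed.

Lemma squot_alpha h : 0 < h -> d %| h -> alpha (squot S d) (h %/ d) = alpha S h.
Proof.
move=> h_gt0 dvd_dh; have hd_gt0 : 0 < h %/ d by rewrite divn_gt0 // dvdn_leq.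
have Eh a : d * (a * (h %/ d)) = a * h by rewrite mulnCA [d * _]mulnC divnK.
have [Apa a_max] := alpha_spec numS h_gt0.
apply: (alpha_eq squot_numsg hd_gt0); first by apply/squot_Ap; rewrite Eh.
by move=> l /squot_Ap; rewrite Eh; apply: a_max.
Qed.

End Quotient.

Section RectangularSemigroup.

Variables (S : nat -> Prop) (gens : seq nat).
Hypotheses (numS : is_numsg S) (gens_spec : mingens_list S gens).

Local Notation m := (mult S).
Local Notation al := (alpha S).

Definition rsum (lam : nat -> nat) : nat := \sum_(g <- gens | g != m) lam g * g.
Definition in_box (lam : nat -> nat) : Prop :=
  forall g, g \in gens -> g != m -> lam g <= al g.

Hypothesis rectS : forall x, Ap S x <-> exists lam, in_box lam /\ x = rsum lam.

Definition rgens : seq nat := [seq g <- gens | g != m].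

Lemma mem_rgens g : (g \in rgens) = (g \in gens) && (g != m).
Proof. by rewrite mem_filter andbC. Qed.

Lemma rgens_uniq : uniq rgens.
Proof. by case: gens_spec => uniq_gens _; exact: filter_uniq. Qed.

Lemma gens_mingen g : g \in gens -> is_mingen S g.
Proof. by case: gens_spec => _ gens_mg /gens_mg. Qed.

Lemma mingen_gens g : is_mingen S g -> g \in gens.
Proof. by case: gens_spec => _ gens_mg /gens_mg. Qed.

Lemma rgens_gt0 g : g \in rgens -> 0 < g.
Proof. by rewrite mem_rgens => /andP [/gens_mingen [_ []]]. Qed.

Lemma rgens_in g : g \in rgens -> S g.
Proof. by rewrite mem_rgens => /andP [/gens_mingen []]. Qed.

Lemma rgens_gt_m g : g \in rgens -> m < g.
Proof.
move=> gR; have := mult_le numS (rgens_gt0 gR) (rgens_in gR).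
by move: gR; rewrite mem_rgens ltn_neqAle eq_sym => /andP [_ ->].
Qed.

Lemma rgens_Ap g : g \in rgens -> Ap S g.
Proof.
move=> gR; split; first exact: rgens_in.
move=> [le_mg Sgm]; move: gR; rewrite mem_rgens => /andP [/gens_mingen [_ [_ indec]] ne].
apply: indec; exists m, (g - m); split; first exact: (mult_gt0 numS).
split; first by move/eqP: ne; lia.
by split; [exact: (mult_in numS) | split=> //; lia].
Qed.

Lemma alpha_rgens_gt0 g : g \in rgens -> 0 < al g.
Proof.
move=> gR; have [_ al_max] := alpha_spec numS (rgens_gt0 gR).
by apply: al_max; rewrite mul1n; exact: rgens_Ap.
Qed.

Lemma rsum_Ap lam : in_box lam -> Ap S (rsum lam).
Proof. by move=> box; apply/rectS; exists lam. Qed.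

Lemma rsum_in lam : in_box lam -> S (rsum lam).
Proof. by move/rsum_Ap/Ap_in. Qed.

Lemma S_rdecomp x : S x -> exists q lam, in_box lam /\ x = q * m + rsum lam.
Proof.
move=> Sx; have [q [w [Apw ->]]] := Ap_decomp numS Sx.
by have [lam [box ->]] := (rectS w).1 Apw; exists q, lam.
Qed.

Lemma rsumE lam : rsum lam = \sum_(g <- rgens) lam g * g.
Proof. by rewrite /rsum big_filter. Qed.

Lemma rsum0 : rsum (fun=> 0) = 0.
Proof. by rewrite /rsum big1. Qed.

Lemma rsumD lam mu : rsum (fun g => lam g + mu g) = rsum lam + rsum mu.
Proof. by rewrite /rsum -big_split /=; apply: eq_bigr => g _; rewrite mulnDl. Qed.

Definition setc (lam : nat -> nat) (i a : nat) : nat -> nat :=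
  fun g => if g == i then a else lam g.

Lemma rsum_setc lam i a :
  i \in rgens -> rsum (setc lam i a) + lam i * i = rsum lam + a * i.
Proof.
move=> iR; rewrite !rsumE !(bigD1_seq i iR rgens_uniq) /= /setc eqxx.
rewrite (eq_bigr (fun g => lam g * g)); first lia.
by move=> g /negbTE ->.
Qed.

Lemma box_setc lam i a : in_box lam -> a <= al i -> in_box (setc lam i a).
Proof. by move=> box le_a g gG ne; rewrite /setc; case: eqP => [-> | _] //; apply: box. Qed.

(* The relation of generator i: (al i + 1) i leaves the Apéry set, hence it
   equals a positive multiple of m plus an element of the box. *)
Lemma alpha_relation i :
  i \in rgens -> exists q lam, in_box lam /\ (al i).+1 * i = q.+1 * m + rsum lam.
Proof.
move=> iR; have [_ al_max] := alpha_spec numS (rgens_gt0 iR).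
have Sr : S ((al i).+1 * i) by apply: (numsgMn numS); exact: rgens_in.
have notAr : ~ Ap S ((al i).+1 * i) by move/al_max; rewrite ltnn.
have [le_m Srm] := notAp_shift Sr notAr.
have [q [lam [box Eq]]] := S_rdecomp Srm.
by exists q, lam; split=> //; rewrite mulSn; lia.
Qed.

(* "The relation of i uses l": (al i + 1) i - m - l still lies in S. *)
Definition uses (i l : nat) : Prop :=
  m + l <= (al i).+1 * i /\ S ((al i).+1 * i - l - m).

Lemma relation_uses i l q lam :
  l \in rgens -> in_box lam -> (al i).+1 * i = q.+1 * m + rsum lam -> 0 < lam l ->
  uses i l.
Proof.
move=> lR box Eq lam_l_gt0.
have [gen_l ne_l] : l \in gens /\ l != m by move: lR; rewrite mem_rgens => /andP [].
have box' : in_box (setc lam l (lam l).-1).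
  by apply: box_setc => //; have := box l gen_l ne_l; lia.
have Eset := rsum_setc lam (lam l).-1 lR.
split; first by have := leq_pmull l lam_l_gt0; lia.
have -> : (al i).+1 * i - l - m = q * m + rsum (setc lam l (lam l).-1).
  by move: Eset; rewrite Eq mulSn; case: (lam l) lam_l_gt0 => // k _; rewrite mulSn; lia.
exact/(numsgD numS)/rsum_in/box'/(multMn_in numS).
Qed.

(* No cycle of generators, each of whose relations uses the previous one:
   summing along the cycle, the Apéry element sum_(z in C) al z * z would
   exceed m by an element of S. *)
Lemma no_uses_cycle (f : nat -> nat) (C : seq nat) :
  uniq C -> C != [::] -> {subset C <= rgens} -> perm_eq (map f C) C ->
  (forall z, z \in C -> uses (f z) z) -> False.
Proof.
move=> uniq_C C_nil sub_C perm_C uses_C.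
pose lamC g := if g \in C then al g else 0.
have boxC : in_box lamC by move=> g _ _; rewrite /lamC; case: (g \in C).
have EC : rsum lamC = \sum_(z <- C) al z * z.
  rewrite rsumE (bigID (mem C)) /= [X in _ + X]big1 ?addn0; last first.
    by move=> g /negbTE gC; rewrite /lamC gC.
  rewrite (eq_bigr (fun z => al z * z)); last by move=> g gC; rewrite /lamC gC.
  rewrite -big_filter; apply/perm_big/uniq_perm => //; first exact: filter_uniq rgens_uniq.
  by move=> g; rewrite mem_filter andb_idr //; exact: sub_C.
set t := fun z => (al (f z)).+1 * f z - z - m.
have Esum : rsum lamC + \sum_(z <- C) z = \sum_(z <- C) t z + \sum_(z <- C) z + size C * m.
  have -> : size C * m = \sum_(z <- C) m.
    by rewrite big_const_seq count_predT iter_addn_0 mulnC.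
  rewrite EC -big_split /= -(perm_big _ perm_C) big_map -!big_split /=.
  apply: eq_big_seq => z zC; have [le_fz _] := uses_C z zC.
  by rewrite /t mulSn; lia.
have St : S (\sum_(z <- C) t z) by apply: (numsg_sum numS) => z /uses_C [].
have size_gt0 : 0 < size C by case: C C_nil {uniq_C sub_C perm_C uses_C lamC boxC EC Esum t St}.
case: (rsum_Ap boxC) => _; apply; split; first by nia.
have -> : rsum lamC - m = \sum_(z <- C) t z + (size C).-1 * m.
  by move: Esum; case: (size C) size_gt0 => // n _; rewrite mulSn; lia.
exact/(numsgD numS)/(multMn_in numS).
Qed.

Lemma exists_unused :
  rgens != [::] -> exists2 j, j \in rgens & forall i, i \in rgens -> ~ uses i j.
Proof.
move=> R_nil; apply: NNPP => no_unused.
have used j : j \in rgens -> exists i, i \in rgens /\ uses i j.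
  move=> jR; apply: NNPP => not_used; apply: no_unused; exists j => // i iR uij.
  by apply: not_used; exists i.
pose f j := epsilon (inhabits 0) (fun i => i \in rgens /\ uses i j).
have fP j : j \in rgens -> f j \in rgens /\ uses (f j) j.
  by move=> jR; exact: (epsilon_spec (inhabits 0) (fun i => i \in rgens /\ uses i j) (used j jR)).
have [x0 x0R] : exists x0, x0 \in rgens by case: rgens R_nil => // x s _; exists x; exact: mem_head.
have [C [uniq_C C_nil sub_C perm_C]] := periodic_orbit x0R (fun z zR => (fP z zR).1).
by apply: (no_uses_cycle uniq_C C_nil sub_C perm_C) => z /sub_C /fP [].
Qed.

Lemma rgens_neq_nil : (exists n, ~ S n) -> rgens != [::].
Proof.
move=> [n notSn]; apply/negP => /eqP R_nil.
have rsum_nil lam : rsum lam = 0 by rewrite rsumE R_nil big_nil.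
have [c Sc] := numsg_cofinite numS.
have [q [lam [_ Ec]]] := S_rdecomp (Sc c (leqnn c)).
have [q' [lam' [_ Ec']]] := S_rdecomp (Sc c.+1 (leqnSn c)).
rewrite rsum_nil addn0 in Ec; rewrite rsum_nil addn0 in Ec'.
have m1 : m = 1.
  have E1 : 1 = (q' - q) * m by rewrite mulnBl -Ec -Ec'; lia.
  by apply/eqP; rewrite -dvdn1 E1 dvdn_mull.
by apply: notSn; rewrite -(muln1 n) -m1; exact: (multMn_in numS).
Qed.

Section UnusedGenerator.

Variable j : nat.
Hypotheses (jR : j \in rgens) (j_unused : forall i, i \in rgens -> ~ uses i j).

Local Notation d := (al j).+1.

Lemma j_gens : j \in gens. Proof. by move: jR; rewrite mem_rgens => /andP []. Qed.
Lemma j_neq_m : j != m. Proof. by move: jR; rewrite mem_rgens => /andP []. Qed.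

Lemma d_gt1 : 1 < d. Proof. by rewrite ltnS alpha_rgens_gt0. Qed.

Lemma relation_avoids_j i : i \in rgens ->
  exists q lam, [/\ in_box lam, lam j = 0 & (al i).+1 * i = q.+1 * m + rsum lam].
Proof.
move=> iR; have [q [lam [box Eq]]] := alpha_relation iR.
exists q, lam; split=> //; case: (posnP (lam j)) => // lam_j_gt0.
by case: (j_unused iR (relation_uses jR box Eq lam_j_gt0)).
Qed.

Definition jfree (x : nat) : Prop :=
  exists q lam, [/\ in_box lam, lam j = 0 & x = q * m + rsum lam].

(* Any j-free coefficient vector, even outside the box, gives a j-free
   element: coefficients beyond al i are reduced using the relation of i,
   which avoids j, strictly decreasing the value of rsum. *)
Lemma jfree_rsum lam : lam j = 0 -> jfree (rsum lam).
Proof.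
move: {2}(rsum lam) (leqnn (rsum lam)) => N; elim: N lam => [|N IHN] lam le_N lam_j.
  by exists 0, (fun=> 0); split=> //; rewrite rsum0; lia.
have [box | notbox] := classic (in_box lam); first by exists 0, lam.
have [i [gen_i ne_i lt_i]] : exists i, [/\ i \in gens, i != m & al i < lam i].
  apply: NNPP => H; apply: notbox => g gG ne; rewrite leqNgt; apply/negP => lt_g.
  by apply: H; exists g.
have iR : i \in rgens by rewrite mem_rgens gen_i ne_i.
have ne_ij : i != j by apply: contraTneq lt_i => ->; rewrite lam_j.
have [qi [mu [box_mu mu_j Ei]]] := relation_avoids_j iR.
(* replace (al i + 1) i by (qi + 1) m + rsum mu *)
pose lam' g := setc lam i (lam i - (al i).+1) g + mu g.
have Eset := rsum_setc lam (lam i - (al i).+1) iR.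
have le_rel : (al i).+1 * i <= lam i * i by rewrite leq_mul2r lt_i orbT.
have m_gt0 := mult_gt0 numS.
rewrite mulnBl in Eset; rewrite mulSn in Ei.
have lt_N : rsum lam' <= N by rewrite /lam' rsumD; lia.
have lam'_j : lam' j = 0 by rewrite /lam' /setc eq_sym (negbTE ne_ij) lam_j mu_j.
have [q [nu [box_nu nu_j Enu]]] := IHN lam' lt_N lam'_j.
exists (q + qi.+1), nu; split=> //.
by move: Enu; rewrite /lam' rsumD mulnDl mulSn; lia.
Qed.

Lemma jfree0 : jfree 0.
Proof. by rewrite -rsum0; apply: jfree_rsum. Qed.

Lemma jfree_in x : jfree x -> S x.
Proof. by move=> [q [lam [box _ ->]]]; exact/(numsgD numS)/rsum_in/box/(multMn_in numS). Qed.

Lemma jfreeD x y : jfree x -> jfree y -> jfree (x + y).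
Proof.
move=> [q [lam [box lam_j ->]]] [q' [lam' [box' lam'_j ->]]].
have [q2 [nu [box_nu nu_j Enu]]] := @jfree_rsum (fun g => lam g + lam' g) ltac:(by rewrite /= lam_j lam'_j).
by exists (q + q' + q2), nu; split=> //; move: Enu; rewrite rsumD !mulnDl; lia.
Qed.

Lemma jfreeMn k x : jfree x -> jfree (k * x).
Proof.
move=> jfree_x; elim: k => [|k IHk]; first by rewrite mul0n; exact: jfree0.
by rewrite mulSn; apply: jfreeD.
Qed.

Lemma jfree_m : jfree m.
Proof. by exists 1, (fun=> 0); split=> //; rewrite rsum0; lia. Qed.

Lemma jfree_gen i : i \in rgens -> i != j -> jfree i.
Proof.
move=> iR ne_ij; have Eset := rsum_setc (fun=> 0) 1 iR.
rewrite /= rsum0 mul1n mul0n addn0 add0n in Eset; rewrite -Eset.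
by apply: jfree_rsum; rewrite /setc eq_sym (negbTE ne_ij).
Qed.

Lemma jfree_dj : jfree (d * j).
Proof. by have [q [lam [box lam_j Eq]]] := relation_avoids_j jR; exists q.+1, lam. Qed.

Lemma Ap_mul_j l : l <= al j -> Ap S (l * j).
Proof.
move=> le_l; have [Apj _] := alpha_spec numS (rgens_gt0 jR).
have Sj := rgens_in jR.
apply: (Ap_summand numS (b := (al j - l) * j)); last exact: (numsgMn numS).
  by rewrite -mulnDl subnKC.
exact: (numsgMn numS).
Qed.

(* Key fact: no l j with 0 < l < d is congruent mod m to a j-free element,
   otherwise rectangularity would put (al j + 1) j in Ap(S). *)
Lemma mul_j_not_jfree_mod l v : 0 < l -> l < d -> jfree v -> l * j <> v %[mod m].
Proof.
move=> l_gt0 lt_ld [q [mu [box mu_j ->]]] Emod.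
have Elj : l * j = rsum mu.
  by apply: (Ap_inj_mod numS); [apply: Ap_mul_j; lia | exact: rsum_Ap | rewrite Emod modnMDl].
have box' : in_box (setc mu j (al j - l).+1) by apply: box_setc => //; lia.
have Eset := rsum_setc mu (al j - l).+1 jR.
rewrite mu_j mul0n addn0 -Elj -mulnDl in Eset.
have [_ al_max] := alpha_spec numS (rgens_gt0 jR).
have : d <= al j; last by rewrite ltnn.
apply: al_max; have -> : d * j = rsum (setc mu j (al j - l).+1) by rewrite Eset; congr (_ * j); lia.
exact: rsum_Ap.
Qed.

Lemma S_decomp_j x : S x -> exists l v, [/\ l <= al j, jfree v & x = l * j + v].
Proof.
move=> Sx; have [q [lam [box ->]]] := S_rdecomp Sx.
exists (lam j), (q * m + rsum (setc lam j 0)); split.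
- exact: box j_gens j_neq_m.
- by exists q, (setc lam j 0); split=> //; [exact: box_setc | rewrite /setc eqxx].
by have := rsum_setc lam 0 jR; rewrite mul0n addn0; lia.
Qed.

Lemma residue_decomp_j n : exists l v, [/\ l <= al j, jfree v & n = l * j + v %[mod m]].
Proof.
have [c Sc] := numsg_cofinite numS.
have le_c : c <= c * m + n by have := leq_pmulr c (mult_gt0 numS); lia.
have [l [v [le_l jfree_v Ev]]] := S_decomp_j (Sc _ le_c).
by exists l, v; split=> //; rewrite -Ev modnMDl.
Qed.

Lemma d_mod_jfree : exists2 v1, jfree v1 & d = v1 %[mod m].
Proof.
have [l [v [_ jfree_v E1]]] := residue_decomp_j 1.
exists (l * (d * j) + d * v); first by apply: jfreeD; apply: jfreeMn; [exact: jfree_dj | ].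
by rewrite -{1}(muln1 d) -modnMmr E1 modnMmr mulnDr mulnCA.
Qed.

Lemma jfree_dvd x : jfree x -> d %| x.
Proof.
move=> jfree_x; have [v1 jfree_v1 Ev1] := d_mod_jfree.
have m_gt0 := mult_gt0 numS.
set q := x %/ d; set r := x %% d; have Ex : x = q * d + r := divn_eq x d.
(* r = x + q (m - 1) v1 mod m, and the latter is j-free *)
have Er : r = x + q * m.-1 * v1 %[mod m].
  rewrite -modnDmr -modnMmr -Ev1 modnMmr modnDmr.
  have -> : x + q * m.-1 * d = (q * d) * m + r.
    by rewrite {1}Ex -{2}(prednK m_gt0) [_ * m.-1.+1]mulnS; nia.
  by rewrite modnMDl.
have jfree_v2 : jfree ((x + q * m.-1 * v1) * j).
  by rewrite mulnC; apply: jfreeMn; apply: jfreeD => //; exact: jfreeMn.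
have [r0 | r_gt0] := posnP r; first by apply/dvdnP; exists q; rewrite Ex r0 addn0.
exfalso; apply: (mul_j_not_jfree_mod r_gt0 (ltn_mod x d) jfree_v2).
by rewrite -modnMml Er modnMml.
Qed.

Lemma dvd_d_m : d %| m. Proof. exact: jfree_dvd jfree_m. Qed.

Lemma dvd_d_gens g : g \in gens -> g != j -> d %| g.
Proof.
move=> gG ne_gj; have [-> | ne_gm] := eqVneq g m; first exact: dvd_d_m.
by apply/jfree_dvd/jfree_gen => //; rewrite mem_rgens gG.
Qed.

(* j is a unit mod d: 1 = l j + v mod m with d | v and d | m. *)
Lemma coprime_j_d : coprime j d.
Proof.
have [l [v [_ jfree_v E1]]] := residue_decomp_j 1.
have : 1 = l * j %[mod d].
  rewrite -(modn_dvdm 1 dvd_d_m) E1 (modn_dvdm _ dvd_d_m).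
  by rewrite -modnDmr (eqP (jfree_dvd jfree_v)) addn0.
rewrite (modn_small d_gt1) => E1d.
have Elj : l * j = l * j %/ d * d + 1 by rewrite {1}(divn_eq (l * j) d) -E1d.
have g_lj : gcdn j d %| l * j by rewrite dvdn_mull ?dvdn_gcdl.
by rewrite Elj dvdn_addr ?dvdn_mull ?dvdn_gcdr // dvdn1 in g_lj.
Qed.

Local Notation T := (squot S d).

Lemma quot_numsg : is_numsg T. Proof. exact: squot_numsg numS (ltn0Sn _). Qed.

Lemma m_eq : m = d * mult T. Proof. exact: mult_squot_eq numS (ltn0Sn _) dvd_d_m. Qed.

Lemma quot_Ap t : Ap T t <-> Ap S (d * t). Proof. exact: squot_Ap numS (ltn0Sn _) dvd_d_m t. Qed.

Lemma quot_j : T j. Proof. exact: jfree_in jfree_dj. Qed.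

Lemma quot_j_notAp : ~ Ap T j.
Proof.
move/quot_Ap; have [_ al_max] := alpha_spec numS (rgens_gt0 jR).
by move/al_max; rewrite ltnn.
Qed.

Lemma quot_mult_lt_j : d * mult T < j.
Proof. by rewrite -m_eq; exact: rgens_gt_m. Qed.

(* j = m(T) + (j - m(T)) is a decomposition in T, since d j - m is j-free. *)
Lemma quot_j_notgen : ~ is_mingen T j.
Proof.
move=> [_ [_ indec]]; apply: indec.
have multT_gt0 := mult_gt0 quot_numsg.
have lt_mTj : mult T < j by have := quot_mult_lt_j; have := d_gt1; nia.
exists (mult T), (j - mult T); do 2!split=> //; first lia.
split; first exact: (mult_in quot_numsg).
split; last lia.
have [q [lam [box _ Eq]]] := relation_avoids_j jR.
rewrite /squot mulnBr -m_eq.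
have -> : d * j - m = q * m + rsum lam by rewrite Eq mulSn; lia.
exact/(numsgD numS)/rsum_in/box/(multMn_in numS).
Qed.

Lemma S_gluing x : S x <-> gluing T j d x.
Proof.
split=> [Sx | [t [k [Tt ->]]]]; last by apply: (numsgD numS Tt); rewrite mulnC; apply: (numsgMn numS); exact: rgens_in.
have [l [v [_ jfree_v ->]]] := S_decomp_j Sx.
exists (v %/ d), l; split; first by rewrite /squot mulnC divnK ?jfree_dvd //; exact: jfree_in.
by rewrite [d * _]mulnC divnK ?jfree_dvd // addnC mulnC.
Qed.

(* Two elements of S whose sum is divisible by d either are both divisible
   by d, or their sum is j-free plus d j (the j-coefficients add up to d). *)
Lemma sum_dvd_d a b : S a -> S b -> d %| a + b ->
  (d %| a /\ d %| b) \/ exists2 v, jfree v & a + b = v + d * j.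
Proof.
move=> Sa Sb.
have [la [va [le_la jfree_va ->]]] := S_decomp_j Sa.
have [lb [vb [le_lb jfree_vb ->]]] := S_decomp_j Sb.
move=> dvd_ab.
have dvd_va := jfree_dvd jfree_va; have dvd_vb := jfree_dvd jfree_vb.
have /dvdnP [r Er] : d %| la + lb.
  have cop_dj : coprime d j by rewrite coprime_sym coprime_j_d.
  rewrite -(Gauss_dvdl _ cop_dj) mulnDl.
  by move: dvd_ab; rewrite addnACA (dvdn_addl _ (dvdn_add dvd_va dvd_vb)).
have [r0 | r1] : r = 0 \/ r = 1 by nia.
  by left; have [-> ->] : la = 0 /\ lb = 0 by lia; rewrite !mul0n !add0n.
right; exists (va + vb); first exact: jfreeD.
by rewrite addnACA -mulnDl Er r1 mul1n addnC mulnC.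
Qed.

Lemma quot_mingen_S g : is_mingen T g -> is_mingen S (d * g).
Proof.
move=> [Tg [g_gt0 indec]]; split=> //; split; first by rewrite muln_gt0 g_gt0.
move=> [a [b [a_gt0 [b_gt0 [Sa [Sb Eg]]]]]].
have dvd_ab : d %| a + b by rewrite -Eg dvdn_mulr.
have [[/dvdnP [a' Ea] /dvdnP [b' Eb]] | [v jfree_v Ev]] := sum_dvd_d Sa Sb dvd_ab.
  apply: indec; exists a', b'.
  split; first by move: a_gt0; rewrite Ea muln_gt0 => /andP [].
  split; first by move: b_gt0; rewrite Eb muln_gt0 => /andP [].
  rewrite /squot ![d * _]mulnC -Ea -Eb; do 2!split=> //.
  by apply/eqP; rewrite -(eqn_pmul2r (ltn0Sn (al j))) mulnDl -Ea -Eb -Eg mulnC.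
(* g = v / d + j in T, and g = j is excluded since j is not a generator of T *)
have [v' Ev'] := dvdnP (jfree_dvd jfree_v).
have Eg' : g = v' + j by apply/eqP; rewrite -(eqn_pmul2l (ltn0Sn (al j))); apply/eqP; lia.
have [v'0 | v'_gt0] := posnP v'.
  apply: quot_j_notgen; rewrite Eg' v'0 add0n in Tg indec.
  by split=> //; split=> //; exact: rgens_gt0.
apply: indec; exists v', j; split=> //; split; first exact: rgens_gt0.
split; first by rewrite /squot mulnC -Ev'; exact: jfree_in.
by split; [exact: quot_j | exact: Eg'].
Qed.

Lemma quot_gen_eq g : g \in gens -> g != j -> d * (g %/ d) = g.
Proof. by move=> gG ne_gj; rewrite mulnC divnK ?dvd_d_gens. Qed.

Lemma gens_mingen_quot g : g \in gens -> g != j -> is_mingen T (g %/ d).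
Proof.
move=> gG ne_gj; have [Sg [g_gt0 indec]] := gens_mingen gG.
split; first by rewrite /squot quot_gen_eq.
split; first by rewrite divn_gt0 // dvdn_leq ?dvd_d_gens.
move=> [a [b [a_gt0 [b_gt0 [Ta [Tb Eg]]]]]]; apply: indec.
exists (d * a), (d * b); rewrite !muln_gt0 a_gt0 b_gt0.
by do 2!split=> //; split=> //; rewrite -mulnDr -Eg quot_gen_eq.
Qed.

Definition quot_gens : seq nat := [seq g %/ d | g <- [seq g <- gens | g != j]].

Lemma quot_mingens : mingens_list T quot_gens.
Proof.
case: gens_spec => uniq_gens _; split.
  rewrite map_inj_in_uniq ?filter_uniq // => a b.
  rewrite !mem_filter => /andP [ne_aj aG] /andP [ne_bj bG] Eab.
  by rewrite -(quot_gen_eq aG ne_aj) Eab quot_gen_eq.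
move=> t; split.
  by move=> /mapP [g]; rewrite mem_filter => /andP [ne_gj gG] ->; exact: gens_mingen_quot.
move=> /quot_mingen_S /mingen_gens dtG; apply/mapP; exists (d * t); last by rewrite mulKn.
rewrite mem_filter dtG andbT; apply/eqP => Edt.
(* j = d t would contradict coprime j d, as d > 1 *)
have := coprime_j_d; rewrite -{1}Edt coprimeMl /coprime gcdnn => /andP [/eqP d1 _].
by move: d_gt1; rewrite d1.
Qed.

Lemma rsum_jfree lam :
  lam j = 0 -> rsum lam = \sum_(g <- gens | (g != j) && (g != m)) lam g * g.
Proof.
move=> lam_j; rewrite /rsum [RHS](eq_bigl (fun g => (g != m) && (g != j))) => [|g]; last by rewrite andbC.
by rewrite big_mkcondr /=; apply: eq_bigr => g _; case: eqP => // ->; rewrite lam_j.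
Qed.

Lemma quot_sum (F : nat -> nat) :
  d * \sum_(t <- quot_gens | t != mult T) F t * t =
  \sum_(g <- gens | (g != j) && (g != m)) F (g %/ d) * g.
Proof.
rewrite big_map big_filter_cond big_distrr /= big_seq_cond [RHS]big_seq_cond.
apply: eq_big => [g | g /andP [gG /andP [ne_gj _]]]; last by rewrite mulnCA quot_gen_eq.
case gG: (g \in gens); case ne_gj: (g != j) => //=.
by rewrite m_eq -{2}(quot_gen_eq gG ne_gj) eqn_pmul2l.
Qed.

Lemma quot_alpha g : g \in gens -> g != j -> alpha T (g %/ d) = al g.
Proof.
move=> gG ne_gj; apply: (squot_alpha numS (ltn0Sn _) dvd_d_m).
  exact: (gens_mingen gG).2.1.
exact: dvd_d_gens.
Qed.

Lemma Ap_dvd_d_coef lam : in_box lam -> d %| rsum lam -> lam j = 0.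
Proof.
move=> box dvd_sum; have Eset := rsum_setc lam 0 jR; rewrite mul0n addn0 in Eset.
have dvd_rest : d %| rsum (setc lam j 0) by apply/jfree_dvd/jfree_rsum; rewrite /setc eqxx.
have cop_dj : coprime d j by rewrite coprime_sym coprime_j_d.
move: dvd_sum; rewrite -Eset (dvdn_addr _ dvd_rest) Gauss_dvdl //.
have := box j j_gens j_neq_m; case: (posnP (lam j)) => // lam_j_gt0 le_lam /(dvdn_leq lam_j_gt0).
by rewrite leqNgt ltnS le_lam.
Qed.

Lemma quot_gens_mult g : g \in gens -> g != j -> (g %/ d != mult T) = (g != m).
Proof. by move=> gG ne_gj; rewrite m_eq -{2}(quot_gen_eq gG ne_gj) eqn_pmul2l. Qed.

Lemma quot_rect x : Ap T x <-> exists lam : nat -> nat,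
  (forall g, g \in quot_gens -> g != mult T -> lam g <= alpha T g) /\
  x = \sum_(g <- quot_gens | g != mult T) lam g * g.
Proof.
split.
  move=> /quot_Ap /rectS [lam [box Edx]].
  have lam_j : lam j = 0 by apply: Ap_dvd_d_coef; rewrite // -Edx dvdn_mulr.
  exists (fun t => lam (d * t)); split.
    move=> t /mapP [g]; rewrite mem_filter => /andP [ne_gj gG] -> ne_m.
    rewrite quot_gen_eq // quot_alpha //; apply: box => //.
    by rewrite -quot_gens_mult.
  apply/eqP; rewrite -(eqn_pmul2l (ltn0Sn (al j))) Edx quot_sum rsum_jfree //.
  apply/eqP; rewrite big_seq_cond [RHS]big_seq_cond; apply: eq_bigr => g.
  by case/and3P => gG ne_gj _; rewrite quot_gen_eq.
move=> [lamT [boxT Ex]]; apply/quot_Ap/rectS.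
exists (setc (fun g => lamT (g %/ d)) j 0); split.
  move=> g gG ne_gm; rewrite /setc; case: eqP => [// | /eqP ne_gj].
  rewrite -(quot_alpha gG ne_gj); apply: boxT; last by rewrite quot_gens_mult.
  by apply: map_f; rewrite mem_filter ne_gj.
rewrite Ex quot_sum rsum_jfree /setc ?eqxx //.
rewrite big_seq_cond [RHS]big_seq_cond; apply: eq_bigr => g.
by case/and3P => _ /negbTE -> _.
Qed.

End UnusedGenerator.

Lemma rect_is_gluing : (exists n, ~ S n) ->
  exists (T : nat -> Prop) (d1 d2 : nat),
    is_numsg T /\ alpha_rect T /\
    0 < d1 /\ 0 < d2 /\ coprime d1 d2 /\
    T d1 /\ ~ is_mingen T d1 /\ 2 <= d2 /\ ~ Ap T d1 /\
    d2 * mult T < d1 /\ (forall x, S x <-> gluing T d1 d2 x).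
Proof.
move=> /rgens_neq_nil /exists_unused [j jR j_unused].
exists (squot S (al j).+1), j, (al j).+1.
split; first exact: quot_numsg.
split; first by exists (quot_gens j); split; [exact: quot_mingens | exact: quot_rect].
split; first exact: rgens_gt0.
split=> //; split; first exact: coprime_j_d.
split; first exact: quot_j.
split; first exact: quot_j_notgen.
split; first exact: d_gt1.
split; first exact: quot_j_notAp.
split; first exact: quot_mult_lt_j.
exact: S_gluing.
Qed.

End RectangularSemigroup.

Theorem mainTheorem10 :
  (* (a) *)
  (forall (T : nat -> Prop) (d1 d2 : nat),
      is_numsg T -> alpha_rect T ->
      0 < d1 -> 0 < d2 -> coprime d1 d2 ->
      T d1 -> ~ is_mingen T d1 -> 2 <= d2 -> ~ Ap T d1 ->
      d2 * mult T < d1 ->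
      is_numsg (gluing T d1 d2) /\ alpha_rect (gluing T d1 d2))
  /\
  (* (b) *)
  (forall S : nat -> Prop,
      is_numsg S -> (exists n, ~ S n) -> alpha_rect S ->
      exists (T : nat -> Prop) (d1 d2 : nat),
        is_numsg T /\ alpha_rect T /\
        0 < d1 /\ 0 < d2 /\ coprime d1 d2 /\
        T d1 /\ ~ is_mingen T d1 /\ 2 <= d2 /\ ~ Ap T d1 /\
        d2 * mult T < d1 /\
        (forall x, S x <-> gluing T d1 d2 x)).
Proof.
split.
  move=> T d1 d2 numT [gensT [gensT_spec rectT]] d1_gt0 _ cop_d Td1 notgen_d1 d2_gt1 notApd1 lt_d1.
  split; first exact: glue_numsg.
  exists (glue_gens d1 d2 gensT); split; first exact: glue_mingens.
  exact: glue_rect.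
move=> S numS gapS [gens [gens_spec rectS]].
exact: (rect_is_gluing numS gens_spec rectS gapS).
Qed.
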